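(* Let $p$ be a prime and let $\varphi\in\mathbb{Z}[x]$ with $\varphi\not\equiv 0\bmod p$. Let $l,m$ be nonnegative integers and let $I=\langle p^l,\varphi^m\rangle$ be the ideal of $\mathbb{Z}[x]$. Then (1) $I:\langle p^i\rangle=\langle p^{l-i},\varphi^m\rangle$ for every $i\le l$, and (2) $I:\langle\varphi^j\rangle=\langle p^l,\varphi^{m-j}\rangle$ for every $j\le m$.
   Context: For ideals $I,J$ of a commutative ring $S$, the quotient ideal is $I:J=\{a\in S\mid aJ\subseteq I\}$. *)

From mathcomp Require Import all_boot all_order all_algebra.
Set Implicit Arguments. Unset Strict Implicit. Unset Printing Implicit Defensive.
Import Order.TTheory GRing.Theory Num.Theory.
Local Open Scope ring_scope.

Definition ideal2 (S : comRingType) (a b : S) : S -> Prop :=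
  fun f => exists u v : S, f = u * a + v * b.

Definition ideal1 (S : comRingType) (c : S) : S -> Prop :=
  fun f => exists u : S, f = u * c.

Definition colon (S : comRingType) (I J : S -> Prop) : S -> Prop :=
  fun a => forall b, J b -> I (a * b).

(* phi is not congruent to 0 mod p: some coefficient is not divisible by p. *)
Definition nonzero_mod (p : nat) (phi : {poly int}) : Prop :=
  exists i : nat, ~~ (p%:Z %| phi`_i)%Z.

From mathcomp Require Import all_boot all_order all_algebra.
From mathcomp Require Import ring.

Set Implicit Arguments.
Unset Strict Implicit.
Unset Printing Implicit Defensive.
Import GRing.Theory Num.Theory.
Local Open Scope ring_scope.

(* Both colon ideals reduce to one cancellation property: if [a] is a
   nonzero element that is "prime to [b]" ([a | b g] implies [a | g]), then
   [a^k | b^n g] implies [a^k | g].  In [Z[x]] this holds for [a = p] and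
   [b = phi]: reducing modulo [p] maps [Z[x]] onto the integral domain
   [F_p[x]], where [p] becomes [0] and [phi] stays nonzero. *)

Lemma colon_ideal1 (S : comRingType) (x y c f : S) :
  colon (ideal2 x y) (ideal1 c) f <-> ideal2 x y (f * c).
Proof.
split=> [|[u [v Efc]] _ [w ->]]; first by apply; exists 1; rewrite mul1r.
by exists (w * u), (w * v); rewrite mulrCA Efc; ring.
Qed.

Section PrimeToCancellation.

Variables (S : idomainType) (a b : S).
Hypothesis a_neq0 : a != 0.
Hypothesis a_prime_to_b : forall g, ideal1 a (b * g) -> ideal1 a g.

Lemma ideal1_mul_expr_l n g : ideal1 a (b ^+ n * g) -> ideal1 a g.
Proof.
elim: n g => [|n IHn] g; first by rewrite expr0 mul1r.
by rewrite exprS -mulrA => /a_prime_to_b /IHn.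
Qed.

Lemma ideal1_expr_mul_expr_l k n g :
  ideal1 (a ^+ k) (b ^+ n * g) -> ideal1 (a ^+ k) g.
Proof.
elim: k g => [|k IHk] g; first by exists g; rewrite expr0 mulr1.
rewrite exprSr => -[w Ebg].
have [v Eg] : ideal1 (a ^+ k) g by apply: IHk; exists (w * a); rewrite Ebg; ring.
have : ideal1 a v.
  apply: (ideal1_mul_expr_l (n := n)); exists w.
  by apply: (mulIf (expf_neq0 k a_neq0)); rewrite -mulrA -Eg Ebg; ring.
by case=> u Ev; exists u; rewrite Eg Ev; ring.
Qed.

Lemma ideal2_mulr_expr_l l m i f : (i <= l)%N ->
  ideal2 (a ^+ l) (b ^+ m) (f * a ^+ i) <-> ideal2 (a ^+ (l - i)) (b ^+ m) f.
Proof.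
move=> le_il; have El : a ^+ l = a ^+ (l - i) * a ^+ i by rewrite -exprD subnK.
split=> [[u [v Efa]] | [u [v ->]]]; last first.
  by exists u, (v * a ^+ i); rewrite El; ring.
have [w Ev] : ideal1 (a ^+ i) v.
  apply: (ideal1_expr_mul_expr_l (n := m)); exists (f - u * a ^+ (l - i)).
  by rewrite mulrBl Efa El; ring.
exists u, w; apply: (mulIf (expf_neq0 i a_neq0)).
by rewrite Efa Ev El; ring.
Qed.

Lemma ideal2_mulr_expr_r l m j f : (j <= m)%N ->
  ideal2 (a ^+ l) (b ^+ m) (f * b ^+ j) <-> ideal2 (a ^+ l) (b ^+ (m - j)) f.
Proof.
move=> le_jm; have Em : b ^+ m = b ^+ (m - j) * b ^+ j by rewrite -exprD subnK.
split=> [[u [v Efb]] | [u [v ->]]]; last first.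
  by exists (u * b ^+ j), v; rewrite Em; ring.
have [w Ew] : ideal1 (a ^+ l) (f - v * b ^+ (m - j)).
  apply: (ideal1_expr_mul_expr_l (n := j)); exists u.
  by rewrite mulrBr mulrC Efb Em; ring.
by exists w, v; rewrite -Ew; ring.
Qed.

End PrimeToCancellation.

Section ReductionModPrime.

Variable p : nat.
Hypothesis p_pr : prime p.

Local Notation P := (p%:R : {poly int}).
Local Notation redp := (map_poly (intr : int -> 'F_p)).

Lemma natr_poly_neq0 : P != 0.
Proof. by rewrite -polyC_natr polyC_eq0 pnatr_eq0 -lt0n prime_gt0. Qed.

Lemma ideal1_natr_polyE g : ideal1 P g <-> redp g = 0.
Proof.
have chFp := pchar_Fp p_pr.
split=> [[w ->] | red_g0].
  by rewrite rmorphM rmorph_nat -polyC_natr pchar_Fp_0 // polyC0 mulr0.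
exists (\poly_(i < size g) (g`_i %/ p%:Z)%Z).
apply/polyP => i; rewrite -polyC_natr coefMC coef_poly.
case: ltnP => [_ | le_gi]; last by rewrite mul0r nth_default.
rewrite natz divzK // (dvdz_pcharf chFp) -coef_map.
by rewrite red_g0 coef0.
Qed.

Lemma redp_neq0 phi : nonzero_mod p phi -> redp phi != 0.
Proof.
case=> i phi_i; apply: contraNneq phi_i => red_phi0.
by rewrite (dvdz_pcharf (pchar_Fp p_pr)) -coef_map red_phi0 coef0.
Qed.

Lemma natr_poly_prime_to phi :
  nonzero_mod p phi -> forall g, ideal1 P (phi * g) -> ideal1 P g.
Proof.
move=> /redp_neq0 red_phi g /ideal1_natr_polyE.
rewrite rmorphM => /eqP; rewrite mulf_eq0 (negbTE red_phi) /=.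
by move/eqP/ideal1_natr_polyE.
Qed.

End ReductionModPrime.

Theorem claim6 (p : nat) (phi : {poly int}) (l m : nat) :
  prime p -> nonzero_mod p phi ->
  let P : {poly int} := p%:R in
  let I := ideal2 (P ^+ l) (phi ^+ m) in
  (forall i : nat, (i <= l)%N ->
     forall f : {poly int},
       colon I (ideal1 (P ^+ i)) f <-> ideal2 (P ^+ (l - i)) (phi ^+ m) f) /\
  (forall j : nat, (j <= m)%N ->
     forall f : {poly int},
       colon I (ideal1 (phi ^+ j)) f <-> ideal2 (P ^+ l) (phi ^+ (m - j)) f).
Proof.
move=> p_pr phi_nz P I.
have P_neq0 := natr_poly_neq0 p_pr.
have P_prime_to_phi := natr_poly_prime_to p_pr phi_nz.
split=> [i le_il | j le_jm] f; rewrite colon_ideal1.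
- exact: (ideal2_mulr_expr_l P_neq0 P_prime_to_phi m f le_il).
- exact: (ideal2_mulr_expr_r P_neq0 P_prime_to_phi l f le_jm).
Qed.
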